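(* Let $n,d,c\in\mathbb{N}$ with $d\ge 50$ and $c\in[d]$, let $\mathcal{F}\subseteq 2^{[n]}$ be a hereditary family with $\delta(\mathcal{F})\ge 2^{d-1}-c+1$, let $P$ be an isolated pile of $\mathcal{F}$, and put $\delta=2^{d-1}-c+1$. Then for every $x\in P$, $\omega_{out}(x)\ge \frac{\delta-d_{\mathcal{G}}(x)}{3+\log_2 c}$.
   Context: A family is hereditary if it is closed under taking subsets. $d_{\mathcal{F}}(x)=|\{F\in\mathcal{F}:x\in F\}|$, $\delta(\mathcal{F})=\min_x d_{\mathcal{F}}(x)$, $N(x)=\bigcup_{x\in F\in\mathcal{F}}F$. A set $P\subseteq[n]$ with $|P|=d$ is a pile of $\mathcal{F}$ if $P\subseteq N(y)$ for every $y\in P$, and there exists $z\in P$ with $N(z)=P$; a pile is isolated if it is disjoint from every other pile. Given the pile $P$, let $\mathcal{G}=\{S\subseteq P: S\in\mathcal{F}\}$ and $d_{\mathcal{G}}(x)=|\{S\in\mathcal{G}:x\in S\}|$. For $x\in P$, the external weight is $\omega_{out}(x)=\sum_{x\in S\in\mathcal{F}\setminus\mathcal{G}}\frac{1}{|S|}$. *)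

From HB Require Import structures.
From mathcomp Require Import all_boot all_order all_algebra.
From mathcomp Require Import reals exp.
Set Implicit Arguments. Unset Strict Implicit. Unset Printing Implicit Defensive.
Import Order.TTheory GRing.Theory Num.Theory.

(* Ground set [n] is modelled by 'I_n; a family is F : {set {set 'I_n}}. *)
Section Defs.
Variable n : nat.
Implicit Types (F : {set {set 'I_n}}) (P S : {set 'I_n}) (x y : 'I_n).

Definition hereditary F : Prop :=
  forall A B : {set 'I_n}, A \in F -> B \subset A -> B \in F.

Definition deg F x : nat := #|[set S in F | x \in S]|.

Definition nbhd F x : {set 'I_n} := \bigcup_(S in F | x \in S) S.

Definition is_pile F (d : nat) P : Prop :=
  #|P| = d /\ (forall y, y \in P -> P \subset nbhd F y) /\
  exists2 z, z \in P & nbhd F z = P.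

Definition isolated_pile F (d : nat) P : Prop :=
  is_pile F d P /\ forall Q, is_pile F d Q -> Q != P -> [disjoint P & Q].

(* G = members of F contained in P *)
Definition subfam F P : {set {set 'I_n}} := [set S in F | S \subset P].

Definition omega_out (R : realType) F P x : R :=
  (\sum_(S in F | (x \in S) && (S \notin subfam F P)) (#|S|%:R)^-1)%R.
End Defs.

From HB Require Import structures.
From mathcomp Require Import all_boot all_order all_algebra.
From mathcomp Require Import reals exp.
From mathcomp Require Import zify lra.
Import Order.TTheory GRing.Theory Num.Theory.

(* Let z be a centre of the pile, N(z) = P.  Heredity pairs every set through
   z and x with its trace without z, so 2 d_F(z) <= d_G(x) + 2^(d-1); with
   d_F(z) >= delta this gives K := delta - d_G(x) <= c - 1, while d_F(x) >= delta
   gives at least K external sets through x.  Put t = floor(log2 c) + 3.  If an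
   external set through x has more than t points, it contains some y outside P,
   and its subsets through x and y of size <= t already give 2^(t-2) > c - 1
   external sets; otherwise all of them have size <= t.  Either way K external
   sets contribute at least 1/t each to omega_out(x). *)

Set Implicit Arguments.
Unset Strict Implicit.
Unset Printing Implicit Defensive.

Lemma subset_of_card (T : finType) (A : {set T}) k :
  (k <= #|A|)%N -> exists2 B : {set T}, B \subset A & #|B| = k.
Proof.
elim: k => [|k IH] hk; first by exists set0; rewrite ?sub0set ?cards0.
have [B BA cB] := IH (ltnW hk).
have /subsetPn[a aA aB] : ~~ (A \subset B).
  by apply/negP => /subset_leq_card; rewrite cB; lia.
exists (a |: B); first by rewrite subUset sub1set aA BA.
by rewrite cardsU1 aB cB.
Qed.

Lemma card_pointed_family_le (T : finType) (A : {set {set T}}) z (Q : {set T}) :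
  (forall S, S \in A -> z \in S /\ S \subset Q) -> (#|A| <= 2 ^ #|Q :\ z|)%N.
Proof.
move=> hA; rewrite -card_powerset.
have inj : {in A &, injective (fun S => S :\ z)}.
  move=> S U /hA[zS _] /hA[zU _] eSU.
  by rewrite -(setD1K zS) -(setD1K zU) eSU.
rewrite -(card_in_imset inj); apply/subset_leq_card/subsetP => _ /imsetP[S SA ->].
by have [_ SQ] := hA S SA; rewrite powersetE setSD.
Qed.

Lemma card_setU_powerset (T : finType) (A B : {set T}) :
  [disjoint A & B] -> #|[set A :|: U | U in powerset B]| = (2 ^ #|B|)%N.
Proof.
move=> dAB; rewrite -card_powerset card_in_imset // => U V.
rewrite !powersetE => UB VB eUV.
have cancelA (W : {set T}) : W \subset B -> (A :|: W) :\: A = W.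
  move=> WB; rewrite setDUl setDv set0U; apply/setDidPl.
  by apply: disjointWl WB _; rewrite disjoint_sym.
by rewrite -(cancelA U UB) -(cancelA V VB) eUV.
Qed.

Section Piles.
Variable n : nat.
Implicit Types (F : {set {set 'I_n}}) (P S : {set 'I_n}) (x y z : 'I_n).

Definition outer F P x := [set S in F | (x \in S) && (S \notin subfam F P)].

Definition small_outer F P x t := [set S in outer F P x | #|S| <= t].

Lemma deg_subfam_outer F P x :
  deg F x = (deg (subfam F P) x + #|outer F P x|)%N.
Proof.
rewrite /deg -(cardsID (subfam F P)); congr (_ + _)%N; apply: eq_card => S;
by rewrite /outer /subfam !inE; case: (x \in S); case: (S \in F); case: (S \subset P).
Qed.

Lemma sub_nbhd F z S : S \in F -> z \in S -> S \subset nbhd F z.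
Proof. by move=> SF zS; apply: (bigcup_sup S); rewrite SF zS. Qed.

Lemma double_card_sets_through_le F P x z : hereditary F -> x != z ->
  (2 * #|[set S in F | [&& z \in S, x \in S & S \subset P]]| <=
     deg (subfam F P) x)%N.
Proof.
move=> hF xz; set A := [set S in F | _].
have inj : {in A &, injective (fun S => S :\ z)}.
  move=> S U; rewrite !inE => /and4P[_ zS _ _] /and4P[_ zU _ _] eSU.
  by rewrite -(setD1K zS) -(setD1K zU) eSU.
rewrite mul2n -addnn /deg.
rewrite -(cardsID [set S : {set 'I_n} | z \in S] [set S in subfam F P | x \in S]).
apply: leq_add; last rewrite -(card_in_imset inj); apply: subset_leq_card.
  apply/subsetP => S; rewrite /A /subfam !inE => /and4P[SF zS xS SP].
  by rewrite SF zS xS SP.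
apply/subsetP => _ /imsetP[S + ->]; rewrite /A !inE => /and4P[SF zS xS SP].
by rewrite eqxx xz xS (hF S) ?subD1set // (subset_trans (subD1set S z) SP).
Qed.

Lemma deg_pile_centre F P x z : hereditary F ->
  z \in P -> nbhd F z = P -> x \in P ->
  (2 * deg F z <= deg (subfam F P) x + 2 ^ #|P|.-1)%N.
Proof.
move=> hF zP Nz xP.
have inP S : S \in F -> z \in S -> S \subset P by rewrite -Nz; apply: sub_nbhd.
have cPz : #|P :\ z| = #|P|.-1 by rewrite (cardsD1 z P) zP.
have [->|xz] := eqVneq x z.
  have le_dG : (deg F z <= deg (subfam F P) z)%N.
    apply/subset_leq_card/subsetP => S; rewrite /subfam !inE => /andP[SF zS].
    by rewrite SF zS (inP S SF zS).
  have le_pow : (deg F z <= 2 ^ #|P|.-1)%N.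
    rewrite -cPz; apply: card_pointed_family_le => S; rewrite inE => /andP[SF zS].
    by split; last exact: inP.
  lia.
set A1 := [set S in F | [&& z \in S, x \in S & S \subset P]].
set A0 := [set S in F | (z \in S) && (x \notin S)].
have split_z : deg F z = (#|A1| + #|A0|)%N.
  rewrite /deg -(cardsID [set S : {set 'I_n} | x \in S]).
  congr (_ + _)%N; apply: eq_card => S; rewrite !inE;
    case SF: (S \in F); case zS: (z \in S); rewrite ?andbF ?andbT //=.
  by rewrite inP ?andbT.
have le_A0 : (#|A0| <= 2 ^ #|P|.-2)%N.
  have cPxz : #|P :\ x :\ z| = #|P|.-2.
    have := cardsD1 z (P :\ x); have := cardsD1 x P.
    by rewrite !inE xP zP eq_sym xz /=; move=> -> ->.
  rewrite -cPxz; apply: card_pointed_family_le => S; rewrite inE => /and3P[SF zS xS].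
  split=> //; apply/subsetP => y yS; rewrite !inE (subsetP (inP S SF zS)) ?andbT //.
  by apply: contraNneq xS => <-.
have P2 : (1 < #|P|)%N.
  rewrite (cardsD1 x P) xP ltnS card_gt0; apply/set0Pn.
  by exists z; rewrite !inE eq_sym xz.
have := double_card_sets_through_le P hF xz; rewrite -/A1 split_z.
have -> : (2 ^ #|P|.-1 = 2 * 2 ^ #|P|.-2)%N by rewrite -expnS; congr (2 ^ _)%N; lia.
by move=> le_A1; rewrite mulnDr leq_add // leq_mul2l le_A0 orbT.
Qed.

Lemma large_outer_card_small F P x S t : hereditary F -> x \in P ->
  S \in outer F P x -> (2 <= t <= #|S|)%N ->
  (2 ^ (t - 2) <= #|small_outer F P x t|)%N.
Proof.
move=> hF xP; rewrite /outer /subfam !inE => /and3P[SF xS].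
rewrite SF /= => /subsetPn[y yS yP] /andP[t2 tS].
have yx : y != x by apply: contraNneq yP => ->.
set xy := [set x; y].
have cxy : #|xy| = 2 by rewrite cards2 eq_sym yx.
have xyS : xy \subset S by rewrite subUset !sub1set xS yS.
have cD : (t - 2 <= #|S :\: xy|)%N.
  by rewrite cardsD (setIidPr xyS) cxy leq_sub2r.
have [D DS cD'] := subset_of_card cD.
have dis : [disjoint xy & D].
  by move: DS; rewrite subsetD disjoint_sym => /andP[].
rewrite -cD' -(card_setU_powerset dis); apply/subset_leq_card/subsetP.
move=> _ /imsetP[U + ->]; rewrite powersetE => UD.
have US : xy :|: U \subset S.
  by rewrite subUset xyS (subset_trans UD) // (subset_trans DS) ?subsetDl.
rewrite /outer /subfam !inE (hF S) // eqxx /=; apply/andP; split.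
- by apply: contraNN yP => /subsetP; apply; rewrite !inE eqxx orbT.
- apply: (leq_trans (leq_card_setU _ _)); rewrite cxy.
  by rewrite -(subnKC t2) leq_add2l -cD' subset_leq_card.
Qed.

Lemma small_outer_card_ge F P x t k : hereditary F -> x \in P -> (2 <= t)%N ->
  (k <= #|outer F P x|)%N -> (k <= 2 ^ (t - 2))%N ->
  (k <= #|small_outer F P x t|)%N.
Proof.
move=> hF xP t2 k_outer k_pow.
have [all_small|] := boolP [forall S in outer F P x, #|S| <= t].
  rewrite (_ : small_outer F P x t = outer F P x) //; apply/setP => S.
  by rewrite inE andb_idr // => /(forall_inP all_small).
rewrite negb_forall_in => /existsP[S /andP[S_outer]]; rewrite -ltnNge => /ltnW tS.
by apply: leq_trans k_pow (large_outer_card_small hF xP S_outer _); rewrite t2.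
Qed.

Lemma omega_out_ge_small (R : realType) F P x t : (0 < t)%N ->
  ((#|small_outer F P x t|)%:R / t%:R <= omega_out R F P x :> R)%R.
Proof.
move=> t0; rewrite /omega_out (bigID (fun S => S \in small_outer F P x t)) /=.
rewrite -[leLHS]addr0 lerD ?sumr_ge0 // => [|S _]; last by rewrite invr_ge0.
rewrite (eq_bigl (fun S => S \in small_outer F P x t)) => [|S]; last first.
  by rewrite !inE; case: (S \in F); case: (x \in S); case: (S \subset P).
rewrite mulr_natl -sumr_const; apply: ler_sum => S; rewrite !inE.
case/andP => /and3P[_ xS _] St.
have S0 : (0 < #|S|)%N by apply/card_gt0P; exists x.
by rewrite lef_pV2 ?posrE ?ltr0n // ler_nat.
Qed.
End Piles.

Local Open Scope ring_scope.

Lemma ler_natB (R : numDomainType) (m n : nat) : m%:R - n%:R <= (m - n)%:R :> R.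
Proof.
have [nm|/ltnW mn] := leqP n m; first by rewrite natrB.
have -> : (m - n = 0)%N by apply/eqP; rewrite subn_eq0.
by rewrite subr_le0 ler_nat.
Qed.

Lemma ler_div_nat (R : realFieldType) (N D : R) (m t : nat) : (0 < t)%N ->
  N <= m%:R -> t%:R <= D -> N / D <= m%:R / t%:R.
Proof.
move=> t0 Nm tD; have t0R : 0 < t%:R :> R by rewrite ltr0n.
have D0 : 0 < D by apply: lt_le_trans tD.
have [N0|N0] := leP N 0.
  apply: (@le_trans _ _ 0); first by rewrite pmulr_lle0 ?invr_gt0.
  by rewrite divr_ge0 ?ler0n // ltW.
apply: (@le_trans _ _ (N / t%:R)); first by rewrite ler_pM2l // lef_pV2 ?posrE.
by rewrite ler_wpM2r // invr_ge0 ltW.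
Qed.

Lemma trunc_log2_le_log (R : realType) (c : nat) : (0 < c)%N ->
  (trunc_log 2 c)%:R <= ln (c%:R : R) / ln 2.
Proof.
move=> c0; have ln2 : 0 < ln (2 : R) by rewrite ln_gt0 // ltr1n.
rewrite ler_pdivlMr // mulr_natl -lnXn ?ltr0n // ler_ln ?posrE ?exprn_gt0 ?ltr0n //.
by rewrite -natrX ler_nat trunc_logP.
Qed.

Theorem mainTheorem17 (R : realType) (n d c : nat)
  (F : {set {set 'I_n}}) (P : {set 'I_n}) :
  (50 <= d)%N -> (1 <= c <= d)%N ->
  hereditary F ->
  (forall x : 'I_n, (2 ^ d.-1 - c + 1 <= deg F x)%N) ->
  isolated_pile F d P ->
  forall x : 'I_n, x \in P ->
    omega_out R F P x >=
      ((2 ^ d.-1)%:R - c%:R + 1 - (deg (subfam F P) x)%:R) /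
      (3 + ln (c%:R : R) / ln 2).
Proof.
move=> _ /andP[c1 cd] hF hdeg [[cP [_ [z zP Nz]]] _] x xP.
have centre := deg_pile_centre hF zP Nz xP; rewrite cP in centre.
have hdz := hdeg z; have hdx := hdeg x; rewrite (deg_subfam_outer F P) in hdx.
have c_le : (c <= 2 ^ d.-1)%N by have := ltn_expl d.-1 (isT : (1 < 2)%N); lia.
set k := trunc_log 2 c; set t := k.+3.
have K_small : (2 ^ d.-1 - c + 1 - deg (subfam F P) x <=
    #|small_outer F P x t|)%N.
  apply: small_outer_card_ge hF xP _ _ _ => //; first by lia.
  have := trunc_log_ltn c (isT : (1 < 2)%N); rewrite /t subn2 /= -/k; lia.
apply: le_trans (omega_out_ge_small R F P x (isT : (0 < t)%N)).
apply: ler_div_nat => //.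
  rewrite -(ler_nat R) in K_small; apply: le_trans K_small.
  by apply: le_trans (ler_natB _ _ _); rewrite natrD natrB.
have -> : t%:R = k%:R + 3 :> R by rewrite /t -addn3 natrD.
have := trunc_log2_le_log R c1; lra.
Qed.
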